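(* Let a program execution be a finite sequence of heaps $h_0,h_1,\dots,h_n$, where $h_0$ is the initial heap in which the only allocated object is the special object $\mathit{Void}$, which is open, and each $h_{i+1}$ is obtained from $h_i$ by one elementary step: either allocating a fresh object, or updating a single attribute $x.a$ of an allocated object $x$ to a value $y$ (giving the heap $h_i[x.a\mapsto y]$). Every object $o$ has a class invariant $o.\mathit{inv}$, a Boolean expression evaluated in a heap. Consider a verification methodology $M$ whose proof obligations guarantee, for every step of every execution of a program that satisfies them: (a) every freshly allocated object is open; (b) whenever $x.\mathit{closed}$ is updated to $\mathit{True}$, $x.\mathit{inv}$ holds in the state before the step; (c) whenever an attribute $x.a$ with $a\neq\mathit{closed}$ is updated to some value $y$ in heap $h$, every object $o$ concerned with this update satisfies $(o.\mathit{closed}\wedge o.\mathit{inv})_h \Rightarrow (o.\mathit{inv})_{h[x.a\mapsto y]}$; (d) class invariants depend neither on the attribute $\mathit{closed}$ (of any object) nor on the allocation status of objects (so allocating a new object, or changing any $\mathit{closed}$ attribute, does not change the truth value of the invariant of any previously allocated object). Then every program that satisfies $M$'s proof obligations satisfies, in every heap of every execution, the property $$\forall o:\ o.\mathit{closed}\Rightarrow o.\mathit{inv} \qquad\text{(G1)}$$ (quantifying over allocated objects).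
   Context: Every object has a built-in Boolean ghost attribute $\mathit{closed}$; $o$ is open if $o.\mathit{closed}=\mathit{False}$. An object $o$ is concerned with an attribute $a$ of an object $x$ if updating $x.a$ might affect the truth value of $o$'s invariant; objects not concerned with an update keep the truth value of their invariant across it. *)

From mathcomp Require Import all_boot.
Set Implicit Arguments. Unset Strict Implicit. Unset Printing Implicit Defensive.

Section Heaps.
Variables (Obj : eqType) (Attr : eqType) (Val : Type).

Record heap := Heap {
  alloc  : Obj -> bool;
  is_closed : Obj -> bool;
  field  : Obj -> Attr -> Val }.

(* Elementary steps. [SAlloc x c] allocates the fresh object x, whose
   closed attribute gets value c (the methodology must guarantee c = false);
   [SClosed x b] is the update x.closed := b;
   [SField x a y] is the update x.a := y for an ordinary attribute a. *)
Inductive step_label :=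
| SAlloc of Obj & bool
| SClosed of Obj & bool
| SField of Obj & Attr & Val.

Definition upd_alloc (h : heap) (x : Obj) (c : bool) : heap :=
  Heap (fun o => (o == x) || alloc h o)
       (fun o => if o == x then c else is_closed h o)
       (field h).

Definition upd_closed (h : heap) (x : Obj) (b : bool) : heap :=
  Heap (alloc h) (fun o => if o == x then b else is_closed h o) (field h).

Definition upd_field (h : heap) (x : Obj) (a : Attr) (y : Val) : heap :=
  Heap (alloc h) (is_closed h)
       (fun o b => if (o == x) && (b == a) then y else field h o b).

Definition apply_step (h : heap) (s : step_label) : heap :=
  match s with
  | SAlloc x c => upd_alloc h x c
  | SClosed x b => upd_closed h x b
  | SField x a y => upd_field h x a y
  end.

Definition step_ok (h : heap) (s : step_label) : Prop :=
  match s with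
  | SAlloc x _ => alloc h x = false
  | SClosed x _ => alloc h x = true
  | SField x _ _ => alloc h x = true
  end.

Definition execution (Void : Obj) (n : nat) (h : nat -> heap)
    (s : nat -> step_label) : Prop :=
  (forall o, alloc (h 0) o = (o == Void)) /\
  is_closed (h 0) Void = false /\
  (forall i, i < n -> step_ok (h i) (s i) /\ h i.+1 = apply_step (h i) (s i)).

End Heaps.

From mathcomp Require Import all_boot.
From Stdlib Require Import Classical.

(* G1 is an inductive invariant of executions.  It holds initially because the
   only allocated object, Void, is open.  Allocation and updates of [closed]
   leave every invariant unchanged by (d); a fresh object is open by (a), and
   an object being closed satisfies its invariant by (b).  An update of x.a
   preserves the invariant of every non-concerned object by definition of
   "concerned", and of every closed concerned one by (c). *)

Section ClosedInvariants.
Variables (Obj Attr : eqType) (Val : Type).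
Variable inv : Obj -> heap Obj Attr Val -> bool.

Definition closed_inv (h : heap Obj Attr Val) : Prop :=
  forall o, alloc h o -> is_closed h o -> inv o h.

Hypothesis inv_field : forall o (h h' : heap Obj Attr Val),
  field h = field h' -> inv o h = inv o h'.

Lemma closed_inv_init (h : heap Obj Attr Val) (Void : Obj) :
  (forall o, alloc h o = (o == Void)) -> is_closed h Void = false ->
  closed_inv h.
Proof. by move=> alloc_h Void_open o; rewrite alloc_h => /eqP ->; rewrite Void_open. Qed.

Lemma closed_inv_upd_alloc h x :
  closed_inv h -> closed_inv (upd_alloc h x false).
Proof.
move=> inv_h o; rewrite (inv_field o _ h) //=.
by case: eqP => //= _; apply: inv_h.
Qed.

Lemma closed_inv_upd_closed h x (b : bool) :
  closed_inv h -> (b -> inv x h) -> closed_inv (upd_closed h x b).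
Proof.
move=> inv_h inv_x o; rewrite (inv_field o _ h) //=.
by case: eqP => [-> _ | _]; [apply: inv_x | apply: inv_h].
Qed.

Lemma closed_inv_upd_field (concerned : Obj -> Obj -> Attr -> Prop) h x a y :
  (forall o, ~ concerned o x a -> inv o (upd_field h x a y) = inv o h) ->
  (forall o, concerned o x a -> is_closed h o -> inv o h ->
     inv o (upd_field h x a y)) ->
  closed_inv h -> closed_inv (upd_field h x a y).
Proof.
move=> unconcerned_inv concerned_inv inv_h o /= alloc_o closed_o.
have inv_o := inv_h o alloc_o closed_o.
have [concerned_o | unconcerned_o] := classic (concerned o x a).
- exact: concerned_inv.
- by rewrite unconcerned_inv.
Qed.

End ClosedInvariants.

Arguments closed_inv {Obj Attr Val} inv h.

Theorem lemma2 (Obj Attr : eqType) (Val : Type)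
  (inv : Obj -> heap Obj Attr Val -> bool)
  (concerned : Obj -> Obj -> Attr -> Prop)
  (* definition of "concerned": non-concerned objects keep the truth value
     of their invariant across an update of x.a *)
  (Hconcerned : forall (h : heap Obj Attr Val) x a y o,
      ~ concerned o x a -> inv o (upd_field h x a y) = inv o h)
  (* (d): invariants depend neither on closed nor on allocation status *)
  (Hd : forall o (h h' : heap Obj Attr Val), field h = field h' ->
      inv o h = inv o h')
  (Void : Obj) (n : nat) (h : nat -> heap Obj Attr Val)
  (s : nat -> step_label Obj Attr Val)
  (Hexec : execution Void n h s)
  (* (a): freshly allocated objects are open *)
  (Ha : forall i x c, i < n -> s i = SAlloc Attr Val x c -> c = false)
  (* (b): closing x requires x.inv in the pre-state *)
  (Hb : forall i x, i < n -> s i = SClosed Attr Val x true -> inv x (h i))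
  (* (c): concerned objects preserve closed-and-invariant *)
  (Hc : forall i x a y, i < n -> s i = SField x a y ->
      forall o, concerned o x a -> is_closed (h i) o -> inv o (h i) ->
        inv o (upd_field (h i) x a y)) :
  forall i, i <= n -> forall o, alloc (h i) o -> is_closed (h i) o -> inv o (h i).
Proof.
case: Hexec => alloc_h0 [Void_open steps].
elim=> [_ | i IH lt_in]; first exact: closed_inv_init alloc_h0 Void_open.
have [_ ->] := steps i lt_in.
have inv_hi : closed_inv inv (h i) by apply: IH; apply: ltnW.
move: (Ha i) (Hb i) (Hc i); case: (s i) => [x c | x b | x a y] /= Ha_i Hb_i Hc_i.
- rewrite (Ha_i x c lt_in erefl); exact: closed_inv_upd_alloc.
- apply: closed_inv_upd_closed => // b_true.
  by move: b_true Hb_i => -> /(_ x lt_in erefl).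
- exact: closed_inv_upd_field (Hconcerned (h i) x a y) (Hc_i x a y lt_in erefl) inv_hi.
Qed.
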